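(* Let $F,G:\mathbb{F}_{2^n}\to\mathbb{F}_{2^n}$ be extended-affine (EA) equivalent, i.e. CCZ-equivalent via an affine permutation $\mathcal{A}(u)=\begin{pmatrix}\mathcal{A}_{11}&0\\ \mathcal{A}_{21}&\mathcal{A}_{22}\end{pmatrix}u+\begin{pmatrix}C\\ D\end{pmatrix}$ of $\mathbb{F}_{2^n}\times\mathbb{F}_{2^n}$ with $\{(x,G(x)):x\in\mathbb{F}_{2^n}\}=\{\mathcal{A}(x,F(x)):x\in\mathbb{F}_{2^n}\}$. Then for all $a,b,c\in\mathbb{F}_{2^n}$, $$\mathrm{LBCT}_F(a,b,c)=\mathrm{LBCT}_G(\mathcal{A}_{11}a,\ \mathcal{A}_{11}b,\ \mathcal{A}_{22}c+\mathcal{A}_{21}b),$$ and the map $(a,b,c)\mapsto(\mathcal{A}_{11}a,\mathcal{A}_{11}b,\mathcal{A}_{22}c+\mathcal{A}_{21}b)$ is a bijection of $\mathbb{F}_{2^n}^3$; hence the LBCT spectrum is preserved under EA-equivalence.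
   Context: Elements of $\mathbb{F}_{2^n}$ are identified with vectors of $\mathbb{F}_2^n$; $\mathcal{A}_{ij}$ are $\mathbb{F}_2$-linear maps of $\mathbb{F}_{2^n}$, $C,D\in\mathbb{F}_{2^n}$, and $\mathcal{A}$ is bijective. For any function $H:\mathbb{F}_{2^n}\to\mathbb{F}_{2^n}$, $$\mathrm{LBCT}_H(a,b,c)=\left|\left\{X\in\mathbb{F}_{2^n} : \exists\,Y\in\mathbb{F}_{2^n}\text{ with } X+Y=b,\ H(X+a)+H(Y+a)=c,\ H(X)+H(Y)=c\right\}\right|.$$ *)

From HB Require Import structures.
From mathcomp Require Import all_boot all_order all_algebra.
Set Implicit Arguments. Unset Strict Implicit. Unset Printing Implicit Defensive.
Import GRing.Theory.
Local Open Scope ring_scope.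

(* F_{2^n} is identified (as an F_2-vector space) with F_2^n = 'rV['F_2]_n.
   F_2-linear maps are n x n matrices over 'F_2 acting on row vectors: u *m M. *)
Notation vec n := 'rV['F_2]_n.

Definition LBCT n (H : vec n -> vec n) (a b c : vec n) : nat :=
  #|[set X : vec n | [exists Y : vec n,
       [&& X + Y == b, H (X + a) + H (Y + a) == c & H X + H Y == c]]]|.

Definition EAmap n (A11 A21 A22 : 'M['F_2]_n) (C D : vec n)
    (u : vec n * vec n) : vec n * vec n :=
  (u.1 *m A11 + C, u.1 *m A21 + u.2 *m A22 + D).

Definition graph n (H : vec n -> vec n) : {set vec n * vec n} :=
  [set (x, H x) | x : vec n].

From HB Require Import structures.
From mathcomp Require Import all_boot all_order all_algebra.
Import GRing.Theory.
Set Implicit Arguments.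
Unset Strict Implicit.
Unset Printing Implicit Defensive.

Local Open Scope ring_scope.

(* If [G (x A11 + C) = x A21 + F x A22 + D], the affine substitution
   [X |-> X A11 + C] maps the LBCT set of [F] at [(a, b, c)] onto that of [G]
   at [(a A11, b A11, c A22 + b A21)]: in characteristic 2 the constants [C]
   and [D] cancel in every sum of two values, and since [X + Y = b] the
   contribution of [A21] to both boomerang equations is the same [b A21]. *)

Lemma addvv_F2 n (x : vec n) : x + x = 0.
Proof. by rewrite -mulr2n -scaler_nat (pchar_Fp_0 (p := 2)) ?scale0r. Qed.

Section LBCTUnderEA.

Variables (n : nat) (F G : vec n -> vec n).
Variables (A11 A21 A22 : 'M['F_2]_n) (C D : vec n).

Hypothesis A11_inj : injective (fun x : vec n => x *m A11).
Hypothesis A22_inj : injective (fun x : vec n => x *m A22).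
Hypothesis G_EA : forall x, G (x *m A11 + C) = x *m A21 + F x *m A22 + D.

Let inA x := x *m A11 + C.

Let eqA11 (u v : vec n) : (u *m A11 == v *m A11) = (u == v).
Proof. exact: (inj_eq A11_inj). Qed.

Let eqA22 (u v : vec n) : (u *m A22 == v *m A22) = (u == v).
Proof. exact: (inj_eq A22_inj). Qed.

Let inA_inj : injective inA.
Proof. by move=> x y /addIr /A11_inj. Qed.

Let inA_shift x a : inA x + a *m A11 = inA (x + a).
Proof. by rewrite /inA mulmxDl addrAC. Qed.

Let inA_add x y : inA x + inA y = (x + y) *m A11.
Proof. by rewrite /inA mulmxDl addrACA addvv_F2 addr0. Qed.

Let G_inA_add x y :
  G (inA x) + G (inA y) = (x + y) *m A21 + (F x + F y) *m A22.
Proof. by rewrite !G_EA !mulmxDl addrACA addvv_F2 addr0 addrACA. Qed.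

Let G_inA_add_eq x y b c : x + y = b ->
  (G (inA x) + G (inA y) == c *m A22 + b *m A21) = (F x + F y == c).
Proof.
by move=> xyb; rewrite G_inA_add xyb addrC (inj_eq (addIr _)) eqA22.
Qed.

Lemma LBCT_condition_EA x y a b c :
  [&& inA x + inA y == b *m A11,
      G (inA x + a *m A11) + G (inA y + a *m A11) == c *m A22 + b *m A21
    & G (inA x) + G (inA y) == c *m A22 + b *m A21]
  = [&& x + y == b, F (x + a) + F (y + a) == c & F x + F y == c].
Proof.
rewrite inA_add eqA11; case: eqP => //= xyb.
by rewrite !inA_shift !G_inA_add_eq // addrACA addvv_F2 addr0.
Qed.

Lemma LBCT_EA a b c :
  LBCT F a b c = LBCT G (a *m A11) (b *m A11) (c *m A22 + b *m A21).
Proof.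
have [inA' inAK inAK'] := injF_bij inA_inj.
rewrite /LBCT -(card_imset _ inA_inj); apply: eq_card => X.
rewrite -[X]inAK' (mem_imset _ _ inA_inj) !inE.
apply/existsP/existsP => [[y cond] | [Y]].
  by exists (inA y); rewrite LBCT_condition_EA.
by rewrite -[Y]inAK' LBCT_condition_EA; exists (inA' Y).
Qed.

End LBCTUnderEA.

Section EAmapProperties.

Variables (n : nat) (A11 A21 A22 : 'M['F_2]_n) (C D : vec n).

Hypothesis EA_inj : injective (EAmap A11 A21 A22 C D).

Lemma EAmap_inj_A22 : injective (fun y : vec n => y *m A22).
Proof.
move=> y y' /= yA22.
have /EA_inj[] // : EAmap A11 A21 A22 C D (0, y) = EAmap A11 A21 A22 C D (0, y').
by rewrite /EAmap /= !mul0mx yA22.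
Qed.

(* [(x, 0)] and [(x', y')] have the same image when [x A11 = x' A11], where
   [y'] solves [y' A22 = (x - x') A21]; it exists as [A22] is onto. *)
Lemma EAmap_inj_A11 : injective (fun x : vec n => x *m A11).
Proof.
move=> x x' /= xA11; have [solve22 _ solve22K] := injF_bij EAmap_inj_A22.
have /EA_inj[] // : EAmap A11 A21 A22 C D (x, 0)
  = EAmap A11 A21 A22 C D (x', solve22 ((x - x') *m A21)).
rewrite /EAmap /= xA11 solve22K mul0mx addr0 mulmxBl.
by rewrite [x' *m A21 + _]addrC subrK.
Qed.

End EAmapProperties.

Lemma graph_EAmap_eval n (F G : vec n -> vec n) (A11 A21 A22 : 'M['F_2]_n)
    (C D : vec n) :
  graph G = EAmap A11 A21 A22 C D @: graph F ->
  forall x, G (x *m A11 + C) = x *m A21 + F x *m A22 + D.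
Proof.
move=> graphGF x.
have : EAmap A11 A21 A22 C D (x, F x) \in graph G.
  by rewrite graphGF; apply/imset_f/imset_f.
by case/imsetP => y _ [-> <-].
Qed.

Lemma LBCT_index_map_bij n (A11 A21 A22 : 'M['F_2]_n) :
  injective (fun x : vec n => x *m A11) ->
  injective (fun x : vec n => x *m A22) ->
  bijective (fun t : vec n * vec n * vec n =>
    (t.1.1 *m A11, t.1.2 *m A11, t.2 *m A22 + t.1.2 *m A21)).
Proof.
move=> A11_inj A22_inj; apply: injF_bij => [[[a b] c]] [[a' b'] c'] /=.
by case=> /A11_inj -> /A11_inj -> /addIr /A22_inj ->.
Qed.

Theorem mainTheorem4 (n : nat) (F G : vec n -> vec n)
    (A11 A21 A22 : 'M['F_2]_n) (C D : vec n) :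
  bijective (EAmap A11 A21 A22 C D) ->
  graph G = EAmap A11 A21 A22 C D @: graph F ->
  (forall a b c : vec n,
     LBCT F a b c = LBCT G (a *m A11) (b *m A11) (c *m A22 + b *m A21))
  /\ bijective (fun t : vec n * vec n * vec n =>
       (t.1.1 *m A11, t.1.2 *m A11, t.2 *m A22 + t.1.2 *m A21)).
Proof.
move=> /bij_inj EA_inj graphGF.
have A11_inj := EAmap_inj_A11 EA_inj.
have A22_inj := EAmap_inj_A22 EA_inj.
split; last exact: LBCT_index_map_bij.
exact: LBCT_EA A11_inj A22_inj (graph_EAmap_eval graphGF).
Qed.
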